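(* Let $\mathbb{T}=\mathbb{R}/2\pi\mathbb{Z}$, let $(a_k)_{k\ge1},(b_k)_{k\ge1}$ be independent stationary centered Gaussian sequences with common correlation function $\rho$ ($\mathbb{E}[a_ka_l]=\mathbb{E}[b_kb_l]=\rho(k-l)$), whose spectral measure $\mu$ (defined by $\rho(k)=\frac1{2\pi}\int_{\mathbb{T}}e^{-iku}d\mu(u)$) has a continuous positive density $\psi$ with respect to Lebesgue measure on $\mathbb{T}$. Let $X_n(s)=\frac{1}{\sqrt n}\sum_{k=1}^n(a_k\cos(ks)+b_k\sin(ks))$ and $r_n(s,t)=\mathbb{E}[X_n(s)X_n(t)]$. Let $a,b\in\{0,1\}$ and $0<\alpha<1$. Then there is a constant $C$ such that for all $n\ge1$ and all $s,t\in\mathbb{T}$, \[|r_n^{(a,b)}(s,t)|\le C\,\frac{n^{a+b}}{(n\,\mathrm{dist}(s,t))^{\alpha}} .\]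
   Context: $r_n^{(a,b)}=\partial_1^a\partial_2^b r_n$. For $s,t\in\mathbb{T}$, $\mathrm{dist}(s,t)$ is the distance from $s-t$ to $2\pi\mathbb{Z}$. *)

From Stdlib Require Import Reals Lra.
From Coquelicot Require Import Coquelicot.
Open Scope R_scope.

(* Spectral representation: rho k = (1/2pi) int_T e^{-iku} psi(u) du,
   written out as real part / imaginary part over one period [0, 2pi]. *)
Definition spectral_density_of (rho : Z -> R) (psi : R -> R) : Prop :=
  forall k : Z,
    rho k = / (2 * PI) * RInt (fun u => cos (IZR k * u) * psi u) 0 (2 * PI) /\
    0 = - / (2 * PI) * RInt (fun u => sin (IZR k * u) * psi u) 0 (2 * PI).

Definition cont_pos_density_on_T (psi : R -> R) : Prop :=
  (forall u, continuous psi u) /\ (forall u, psi (u + 2 * PI) = psi u) /\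
  (forall u, 0 < psi u).

(* r_n(s,t) = E[X_n(s) X_n(t)]
   = (1/n) sum_{k,l=1}^n ( E[a_k a_l] cos(ks) cos(lt) + E[b_k b_l] sin(ks) sin(lt) )
   with E[a_k a_l] = E[b_k b_l] = rho(k-l), E[a_k b_l] = 0, E a_k = E b_k = 0. *)
Definition r_cov (rho : Z -> R) (n : nat) (s t : R) : R :=
  / INR n * sum_f_R0 (fun i =>
    sum_f_R0 (fun j =>
      let k := S i in let l := S j in
      rho (Z.of_nat k - Z.of_nat l)%Z *
        (cos (INR k * s) * cos (INR l * t) + sin (INR k * s) * sin (INR l * t)))
    (n - 1)) (n - 1).

Definition r_der (rho : Z -> R) (a b n : nat) (s t : R) : R :=
  Derive_n (fun s' => Derive_n (fun t' => r_cov rho n s' t') b t) a s.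

Definition distT (s t : R) : R :=
  let x := (s - t) / (2 * PI) in
  2 * PI * Rmin (frac_part x) (1 - frac_part x).

(* Differentiating under the sum gives
   r_n^(a,b)(s,t) = (1/n) sum_{k,l} rho(k-l) k^a l^b cos(ks - lt + c) for a phase c,
   and the spectral representation of rho turns this into
   (1/(2 pi n)) int psi(u) K(s-u, t-u) du, where the kernel K splits into products of
   trigonometric sums sum_k k^p cos(kx + phi).  By Abel summation such a sum is
   O(n^(p+1) / (1 + n sigma(x))) with sigma(x) = |sin(x/2)|, so
   |K| = O(n^(a+b) n^2 / ((1 + n sigma(s-u)) (1 + n sigma(t-u)))).  As
   sigma(s-u) + sigma(t-u) >= sigma(s-t), integrating against the bounded density psi
   gives |r_n^(a,b)| = O(n^(a+b) log(1+c)/c) with c of order n dist(s,t), and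
   log(1+c)/c = O(c^(-alpha)). *)

From Stdlib Require Import Reals Lra Lia.
From Coquelicot Require Import Coquelicot.
Open Scope R_scope.

Fixpoint sum_to (f : nat -> R) (N : nat) : R :=
  match N with O => 0 | S m => sum_to f m + f (S m) end.

Lemma sum_f_R0_sum_to f m : sum_f_R0 (fun i => f (S i)) m = sum_to f (S m).
Proof. induction m as [|m IH]; simpl; [ring | rewrite IH; simpl; ring]. Qed.

Lemma sum_to_ext f g N : (forall k, f k = g k) -> sum_to f N = sum_to g N.
Proof. intros H; induction N as [|N IH]; simpl; [easy | now rewrite IH, H]. Qed.

Lemma sum_to_plus f g N : sum_to (fun k => f k + g k) N = sum_to f N + sum_to g N.
Proof. induction N as [|N IH]; simpl; [ring | rewrite IH; ring]. Qed.

Lemma sum_to_scal a f N : sum_to (fun k => a * f k) N = a * sum_to f N.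
Proof. induction N as [|N IH]; simpl; [ring | rewrite IH; ring]. Qed.

Lemma sum_to_mult f g N M :
  sum_to (fun k => sum_to (fun l => f k * g l) M) N = sum_to f N * sum_to g M.
Proof.
  rewrite (sum_to_ext _ (fun k => f k * sum_to g M)) by (intros; apply sum_to_scal).
  induction N as [|N IH]; simpl; [ring | rewrite IH; ring].
Qed.

Lemma is_derive_sum_to (f : nat -> R -> R) (df : nat -> R) N x :
  (forall k, is_derive (f k) x (df k)) ->
  is_derive (fun y => sum_to (fun k => f k y) N) x (sum_to df N).
Proof.
  intros H; induction N as [|N IH]; simpl.
  - apply (is_derive_const (K:=R_AbsRing) (V:=R_NormedModule) 0 x).
  - apply (is_derive_plus (K:=R_AbsRing) (V:=R_NormedModule)); auto.
Qed.

Lemma is_RInt_sum_to (f : nat -> R -> R) (F : nat -> R) N a b :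
  (forall k, is_RInt (f k) a b (F k)) ->
  is_RInt (fun u => sum_to (fun k => f k u) N) a b (sum_to F N).
Proof.
  intros H; induction N as [|N IH]; simpl.
  - pose proof (is_RInt_const (V:=R_NormedModule) a b 0) as Hconst.
    now rewrite (scal_zero_r (V:=R_NormedModule)) in Hconst.
  - apply (is_RInt_plus (V:=R_NormedModule)); auto.
Qed.

(* Each derivative of [r_n] brings down a factor [k] (in [s]) or [l] (in [t]) and shifts
   the phase [c] by [PI/2] or [-PI/2], so [r_n^(p,q)] is the case [c = (p - q) PI / 2]. *)
Definition cov_deriv (rho : Z -> R) (n p q : nat) (c s t : R) : R :=
  / INR n * sum_to (fun k => sum_to (fun l =>
     rho (Z.of_nat k - Z.of_nat l)%Z *
       (INR k ^ p * INR l ^ q * cos (INR k * s - INR l * t + c))) n) n.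

Lemma r_cov_cov_deriv rho n s t : (1 <= n)%nat ->
  r_cov rho n s t = cov_deriv rho n 0 0 0 s t.
Proof.
  intros Hn. unfold r_cov, cov_deriv. destruct n as [|m]; [lia|].
  replace (S m - 1)%nat with m by lia. f_equal.
  rewrite <- sum_f_R0_sum_to. apply sum_eq. intros i _.
  rewrite <- sum_f_R0_sum_to. apply sum_eq. intros j _.
  simpl. rewrite Rplus_0_r, cos_minus. ring.
Qed.

Lemma is_derive_cov_deriv_l rho n p q c s t :
  is_derive (fun s' => cov_deriv rho n p q c s' t) s
    (cov_deriv rho n (S p) q (c + PI / 2) s t).
Proof.
  apply is_derive_scal.
  apply is_derive_sum_to; intros k. apply is_derive_sum_to; intros l.
  auto_derive; [easy|].
  replace (INR k * s - INR l * t + (c + PI / 2))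
    with ((INR k * s + - (INR l * t) + c) + PI / 2) by ring.
  rewrite cos_plus, cos_PI2, sin_PI2. simpl. ring.
Qed.

Lemma is_derive_cov_deriv_r rho n p q c s t :
  is_derive (fun t' => cov_deriv rho n p q c s t') t
    (cov_deriv rho n p (S q) (c - PI / 2) s t).
Proof.
  apply is_derive_scal.
  apply is_derive_sum_to; intros k. apply is_derive_sum_to; intros l.
  auto_derive; [easy|].
  replace (INR k * s - INR l * t + (c - PI / 2))
    with ((INR k * s + - (INR l * t) + c) - PI / 2) by ring.
  rewrite cos_minus, cos_PI2, sin_PI2. simpl. ring.
Qed.

Lemma Derive_n_r_cov rho n b s t : (1 <= n)%nat -> (b <= 1)%nat ->
  Derive_n (fun t' => r_cov rho n s t') b t =
  cov_deriv rho n 0 b (- INR b * PI / 2) s t.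
Proof.
  intros Hn Hb. destruct b as [|[|]]; [| |lia]; simpl.
  - rewrite r_cov_cov_deriv by easy. f_equal. lra.
  - rewrite (Derive_ext _ (fun t' => cov_deriv rho n 0 0 0 s t'))
      by (intros; now apply r_cov_cov_deriv).
    replace (- (1) * PI / 2) with (0 - PI / 2) by lra.
    apply is_derive_unique, is_derive_cov_deriv_r.
Qed.

Lemma r_der_cov_deriv rho a b n s t : (1 <= n)%nat -> (a <= 1)%nat -> (b <= 1)%nat ->
  r_der rho a b n s t = cov_deriv rho n a b (INR a * PI / 2 - INR b * PI / 2) s t.
Proof.
  intros Hn Ha Hb. unfold r_der. destruct a as [|[|]]; [| |lia]; simpl.
  - rewrite Derive_n_r_cov by easy. f_equal. lra.
  - rewrite (Derive_ext _ (fun s' => cov_deriv rho n 0 b (- INR b * PI / 2) s' t))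
      by (intros; now apply Derive_n_r_cov).
    replace (1 * PI / 2 - INR b * PI / 2) with (- INR b * PI / 2 + PI / 2) by lra.
    apply is_derive_unique, is_derive_cov_deriv_l.
Qed.

Definition kern (n p q : nat) (c x y : R) : R :=
  sum_to (fun k => sum_to (fun l =>
     INR k ^ p * INR l ^ q * cos (INR k * x - INR l * y + c)) n) n.

Lemma ex_RInt_derivable_mult_continuous (g psi : R -> R) a b :
  (forall u, ex_derive g u) -> (forall u, continuous psi u) ->
  ex_RInt (fun u => g u * psi u) a b.
Proof.
  intros Hg Hpsi. apply (ex_RInt_continuous (V:=R_CompleteNormedModule)); intros u _.
  apply (continuous_mult (K:=R_AbsRing) g psi); [|easy].
  now apply (ex_derive_continuous (K:=R_AbsRing) (V:=R_NormedModule)).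
Qed.

Section Spectral.

Variables (rho : Z -> R) (psi : R -> R).
Hypothesis spectral : spectral_density_of rho psi.
Hypothesis psi_cont : forall u, continuous psi u.

Lemma is_RInt_cos_density (z : Z) :
  is_RInt (fun u => cos (IZR z * u) * psi u) 0 (2 * PI) (2 * PI * rho z).
Proof.
  assert (PIpos := PI_RGT_0). destruct (spectral z) as [Hcos _].
  assert (E : 2 * PI * rho z = RInt (fun u => cos (IZR z * u) * psi u) 0 (2 * PI))
    by (rewrite Hcos; field; lra).
  rewrite E. apply (RInt_correct (V:=R_CompleteNormedModule)), ex_RInt_derivable_mult_continuous;
    [intros; auto_derive|]; easy.
Qed.

Lemma is_RInt_sin_density (z : Z) :
  is_RInt (fun u => sin (IZR z * u) * psi u) 0 (2 * PI) 0.
Proof.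
  assert (PIpos := PI_RGT_0). destruct (spectral z) as [_ Hsin].
  replace 0 with (RInt (fun u => sin (IZR z * u) * psi u) 0 (2 * PI)) at 2.
  - apply (RInt_correct (V:=R_CompleteNormedModule)), ex_RInt_derivable_mult_continuous;
      [intros; auto_derive|]; easy.
  - assert (/ (2 * PI) <> 0) by (apply Rinv_neq_0_compat; lra). nra.
Qed.

Lemma is_RInt_cos_convol k l c s t :
  is_RInt (fun u => psi u * cos (INR k * (s - u) - INR l * (t - u) + c)) 0 (2 * PI)
    (2 * PI * rho (Z.of_nat k - Z.of_nat l)%Z * cos (INR k * s - INR l * t + c)).
Proof.
  set (z := (Z.of_nat k - Z.of_nat l)%Z).
  set (A := INR k * s - INR l * t + c).
  assert (Hz : IZR z = INR k - INR l) by (unfold z; now rewrite minus_IZR, <- !INR_IZR_INZ).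
  pose proof (is_RInt_plus (V:=R_NormedModule) _ _ _ _ _ _
     (is_RInt_scal (V:=R_NormedModule) _ _ _ (cos A) _ (is_RInt_cos_density z))
     (is_RInt_scal (V:=R_NormedModule) _ _ _ (sin A) _ (is_RInt_sin_density z))) as H.
  replace (2 * PI * rho z * cos A)
    with (plus (scal (cos A) (2 * PI * rho z)) (scal (sin A) 0))
    by (unfold plus, scal; simpl; unfold mult; simpl; ring).
  eapply is_RInt_ext; [|exact H].
  intros u _. unfold plus, scal; simpl; unfold mult; simpl. rewrite Hz.
  replace (INR k * (s - u) - INR l * (t - u) + c) with (A - (INR k - INR l) * u)
    by (unfold A; ring).
  rewrite cos_minus. ring.
Qed.

Lemma is_RInt_kern_convol n p q c s t : (1 <= n)%nat ->
  is_RInt (fun u => psi u * kern n p q c (s - u) (t - u)) 0 (2 * PI)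
    (2 * PI * INR n * cov_deriv rho n p q c s t).
Proof.
  intros Hn.
  assert (H := is_RInt_sum_to _ _ n 0 (2 * PI) (fun k =>
     is_RInt_sum_to _ _ n 0 (2 * PI) (fun l =>
     is_RInt_scal (V:=R_NormedModule) _ _ _ (INR k ^ p * INR l ^ q) _
       (is_RInt_cos_convol k l c s t)))).
  unfold scal in H; simpl in H; unfold mult in H; simpl in H.
  replace (2 * PI * INR n * cov_deriv rho n p q c s t) with (sum_to (fun k =>
     sum_to (fun l => INR k ^ p * INR l ^ q *
       (2 * PI * rho (Z.of_nat k - Z.of_nat l)%Z * cos (INR k * s - INR l * t + c))) n) n).
  - eapply is_RInt_ext; [|exact H]. intros u _.
    unfold kern. rewrite <- sum_to_scal. apply sum_to_ext; intros k.
    rewrite <- sum_to_scal. apply sum_to_ext; intros l. ring.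
  - assert (INR n <> 0) by (apply not_0_INR; lia).
    unfold cov_deriv. rewrite <- Rmult_assoc, <- sum_to_scal. apply sum_to_ext; intros k.
    rewrite <- sum_to_scal. apply sum_to_ext; intros l. field; easy.
Qed.

End Spectral.

(* Half the chord from [1] to [e^{ix}]: the natural distance to [0] on [R / 2 PI Z]. *)
Definition chord (x : R) : R := Rabs (sin (x / 2)).

Lemma chord_ge0 x : 0 <= chord x.
Proof. apply Rabs_pos. Qed.

Lemma Rabs_cos_le_1 y : Rabs (cos y) <= 1.
Proof. pose proof (COS_bound y). apply Rabs_le; lra. Qed.

Lemma Rabs_sin_le_1 y : Rabs (sin y) <= 1.
Proof. pose proof (SIN_bound y). apply Rabs_le; lra. Qed.

Definition cos_sum (x ph : R) (j : nat) : R := sum_to (fun k => cos (INR k * x + ph)) j.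

Lemma cos_sum_telescope x ph j :
  2 * sin (x / 2) * cos_sum x ph j = sin (INR j * x + x / 2 + ph) - sin (x / 2 + ph).
Proof.
  unfold cos_sum. induction j as [|j IH]; cbn [sum_to].
  - simpl. replace (0 * x + x / 2 + ph) with (x / 2 + ph) by ring. ring.
  - rewrite Rmult_plus_distr_l, IH, S_INR.
    replace (INR j * x + x / 2 + ph) with ((INR j + 1) * x + ph - x / 2) by field.
    replace ((INR j + 1) * x + x / 2 + ph) with ((INR j + 1) * x + ph + x / 2) by field.
    rewrite (sin_minus ((INR j + 1) * x + ph)), (sin_plus ((INR j + 1) * x + ph)). ring.
Qed.

Lemma Rabs_cos_sum_le x ph j : Rabs (cos_sum x ph j) <= INR j.
Proof.
  unfold cos_sum. induction j as [|j IH]; cbn [sum_to].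
  - rewrite Rabs_R0; simpl; lra.
  - rewrite S_INR. pose proof (Rabs_cos_le_1 ((INR j + 1) * x + ph)).
    pose proof (Rabs_triang (sum_to (fun k => cos (INR k * x + ph)) j)
      (cos ((INR j + 1) * x + ph))). lra.
Qed.

Lemma Rabs_cos_sum_chord_le x ph j : Rabs (cos_sum x ph j) * chord x <= 1.
Proof.
  assert (H : Rabs (2 * sin (x / 2) * cos_sum x ph j) <= 2).
  { rewrite cos_sum_telescope. unfold Rminus.
    pose proof (Rabs_triang (sin (INR j * x + x / 2 + ph)) (- sin (x / 2 + ph))) as Htri.
    rewrite Rabs_Ropp in Htri.
    pose proof (Rabs_sin_le_1 (INR j * x + x / 2 + ph)).
    pose proof (Rabs_sin_le_1 (x / 2 + ph)). lra. }
  unfold chord. rewrite !Rabs_mult, Rabs_right in H by lra. lra.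
Qed.

Lemma sum_to_k_cos_by_parts x ph N : sum_to (fun k => INR k * cos (INR k * x + ph)) N =
  (INR N + 1) * cos_sum x ph N - sum_to (cos_sum x ph) N.
Proof.
  induction N as [|N IH]; cbn [sum_to]; unfold cos_sum in *; cbn [sum_to].
  - simpl; ring.
  - rewrite IH, S_INR. ring.
Qed.

Lemma Rabs_sum_to_k_cos_le x ph N :
  Rabs (sum_to (fun k => INR k * cos (INR k * x + ph)) N) <= INR N * INR N.
Proof.
  induction N as [|N IH]; cbn [sum_to].
  - rewrite Rabs_R0; simpl; lra.
  - rewrite S_INR. pose proof (pos_INR N).
    pose proof (Rabs_cos_le_1 ((INR N + 1) * x + ph)).
    pose proof (Rabs_triang (sum_to (fun k => INR k * cos (INR k * x + ph)) N)
      ((INR N + 1) * cos ((INR N + 1) * x + ph))) as Htri.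
    rewrite Rabs_mult, (Rabs_right (INR N + 1)) in Htri by lra. nra.
Qed.

Lemma Rabs_sum_to_cos_sum_chord_le x ph N :
  Rabs (sum_to (cos_sum x ph) N) * chord x <= INR N.
Proof.
  induction N as [|N IH]; cbn [sum_to].
  - rewrite Rabs_R0; simpl; lra.
  - rewrite S_INR. pose proof (Rabs_cos_sum_chord_le x ph (S N)). pose proof (chord_ge0 x).
    pose proof (Rabs_triang (sum_to (cos_sum x ph) N) (cos_sum x ph (S N))). nra.
Qed.

(* Combines the trivial bound [N^(p+1)] with the Dirichlet-kernel bound [~ N^p / chord x]. *)
Lemma Rabs_trig_sum_le p N x ph : (p <= 1)%nat -> (1 <= N)%nat ->
  Rabs (sum_to (fun k => INR k ^ p * cos (INR k * x + ph)) N) * (1 + INR N * chord x)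
    <= 4 * INR N ^ (p + 1).
Proof.
  intros Hp HN. pose proof (chord_ge0 x). assert (1 <= INR N) by (apply (le_INR 1); auto).
  destruct p as [|[|]]; [| |lia]; simpl.
  - rewrite (sum_to_ext _ (fun k => cos (INR k * x + ph))) by (intros; ring).
    fold (cos_sum x ph N).
    pose proof (Rabs_cos_sum_le x ph N). pose proof (Rabs_cos_sum_chord_le x ph N). nra.
  - rewrite (sum_to_ext _ (fun k => INR k * cos (INR k * x + ph))) by (intros; ring).
    pose proof (Rabs_sum_to_k_cos_le x ph N).
    assert (Rabs (sum_to (fun k => INR k * cos (INR k * x + ph)) N) * chord x <= 3 * INR N).
    { rewrite sum_to_k_cos_by_parts. unfold Rminus.
      pose proof (Rabs_cos_sum_chord_le x ph N).
      pose proof (Rabs_sum_to_cos_sum_chord_le x ph N).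
      pose proof (Rabs_triang ((INR N + 1) * cos_sum x ph N) (- sum_to (cos_sum x ph) N))
        as Htri.
      rewrite Rabs_Ropp, Rabs_mult, (Rabs_right (INR N + 1)) in Htri by lra.
      pose proof (Rabs_pos (cos_sum x ph N)). nra. }
    nra.
Qed.

Lemma cos_sub_PI2 y : cos (y + - (PI / 2)) = sin y.
Proof. rewrite cos_plus, cos_neg, sin_neg, cos_PI2, sin_PI2. ring. Qed.

Lemma kern_split n p q c x y : kern n p q c x y =
  sum_to (fun k => INR k ^ p * cos (INR k * x + c)) n *
    sum_to (fun l => INR l ^ q * cos (INR l * y + 0)) n +
  sum_to (fun k => INR k ^ p * cos (INR k * x + (c - PI / 2))) n *
    sum_to (fun l => INR l ^ q * cos (INR l * y + - (PI / 2))) n.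
Proof.
  rewrite <- !sum_to_mult, <- sum_to_plus. apply sum_to_ext; intros k.
  rewrite <- sum_to_plus. apply sum_to_ext; intros l.
  replace (INR k * x + (c - PI / 2)) with ((INR k * x + c) + - (PI / 2)) by ring.
  replace (INR k * x - INR l * y + c) with ((INR k * x + c) - INR l * y) by ring.
  rewrite !cos_sub_PI2, Rplus_0_r, cos_minus. ring.
Qed.

Lemma Rabs_kern_le n p q c x y : (p <= 1)%nat -> (q <= 1)%nat -> (1 <= n)%nat ->
  Rabs (kern n p q c x y) * ((1 + INR n * chord x) * (1 + INR n * chord y))
    <= 32 * INR n ^ (p + q) * INR n ^ 2.
Proof.
  intros Hp Hq Hn. rewrite kern_split.
  pose proof (chord_ge0 x). pose proof (chord_ge0 y). pose proof (pos_INR n).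
  set (X := 1 + INR n * chord x). set (Y := 1 + INR n * chord y).
  assert (HX : 0 < X) by (unfold X; nra). assert (HY : 0 < Y) by (unfold Y; nra).
  set (A1 := sum_to _ n). set (B1 := sum_to _ n). set (A2 := sum_to _ n). set (B2 := sum_to _ n).
  assert (HA1 : Rabs A1 * X <= 4 * INR n ^ (p + 1)) by now apply Rabs_trig_sum_le.
  assert (HA2 : Rabs A2 * X <= 4 * INR n ^ (p + 1)) by now apply Rabs_trig_sum_le.
  assert (HB1 : Rabs B1 * Y <= 4 * INR n ^ (q + 1)) by now apply Rabs_trig_sum_le.
  assert (HB2 : Rabs B2 * Y <= 4 * INR n ^ (q + 1)) by now apply Rabs_trig_sum_le.
  assert (P1 := Rmult_le_compat _ _ _ _
    (Rmult_le_pos _ _ (Rabs_pos A1) (Rlt_le _ _ HX))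
    (Rmult_le_pos _ _ (Rabs_pos B1) (Rlt_le _ _ HY)) HA1 HB1).
  assert (P2 := Rmult_le_compat _ _ _ _
    (Rmult_le_pos _ _ (Rabs_pos A2) (Rlt_le _ _ HX))
    (Rmult_le_pos _ _ (Rabs_pos B2) (Rlt_le _ _ HY)) HA2 HB2).
  pose proof (Rabs_triang (A1 * B1) (A2 * B2)) as Htri. rewrite !Rabs_mult in Htri.
  replace (32 * INR n ^ (p + q) * INR n ^ 2)
    with (2 * (4 * INR n ^ (p + 1) * (4 * INR n ^ (q + 1)))) by (rewrite !pow_add; ring).
  assert (0 < X * Y) by nra. nra.
Qed.

Lemma chord_periodic x : chord (x + 2 * PI) = chord x.
Proof.
  unfold chord. replace ((x + 2 * PI) / 2) with (x / 2 + PI) by field.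
  rewrite sin_plus, sin_PI, cos_PI, <- Rabs_Ropp. f_equal. ring.
Qed.

Lemma chord_opp x : chord (- x) = chord x.
Proof. unfold chord. replace (- x / 2) with (- (x / 2)) by field. now rewrite sin_neg, Rabs_Ropp. Qed.

Lemma chord_triangle s t u : chord (s - t) <= chord (s - u) + chord (t - u).
Proof.
  unfold chord. replace ((s - t) / 2) with ((s - u) / 2 - (t - u) / 2) by field.
  rewrite sin_minus. eapply Rle_trans; [apply Rabs_triang|]. rewrite Rabs_Ropp, !Rabs_mult.
  pose proof (Rabs_cos_le_1 ((t - u) / 2)). pose proof (Rabs_cos_le_1 ((s - u) / 2)).
  pose proof (Rabs_pos (sin ((s - u) / 2))). pose proof (Rabs_pos (sin ((t - u) / 2))). nra.
Qed.

Lemma chord_continuous x : continuity_pt chord x.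
Proof. apply (continuity_pt_comp (fun x => sin (x / 2)) Rabs); [reg | apply Rcontinuity_abs]. Qed.

Lemma third_le_sin y : 0 <= y <= 2 -> y / 3 <= sin y.
Proof.
  intros Hy. pose proof PI2_3_2.
  destruct (sin_bound y 0 ltac:(lra) ltac:(lra)) as [Hlb _].
  unfold sin_approx, sin_term in Hlb. simpl in Hlb. nra.
Qed.

Lemma chord_ge_sixth x : 0 <= x <= PI -> x / 6 <= chord x.
Proof.
  intros Hx. pose proof PI_4. unfold chord.
  pose proof (third_le_sin (x / 2)). rewrite Rabs_right; lra.
Qed.

Lemma distT_le_chord s t : distT s t <= 6 * chord (s - t).
Proof.
  unfold distT, chord. set (x := (s - t) / (2 * PI)).
  assert (PIpos := PI_RGT_0). pose proof PI_4.
  destruct (base_fp x) as [F0 F1]. unfold frac_part in *.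
  set (z := Int_part x) in *. set (f := x - IZR z) in *.
  assert (E : (s - t) / 2 = PI * f + IZR z * PI) by (unfold f, x; field; lra).
  assert (Hz : sin (IZR z * PI) = 0) by (apply sin_eq_0_1; now exists z).
  assert (Hcz : Rabs (cos (IZR z * PI)) = 1).
  { pose proof (sin2_cos2 (IZR z * PI)) as Hpyth. rewrite Hz in Hpyth. unfold Rsqr in Hpyth.
    rewrite <- (Rabs_right 1) by lra. apply Rsqr_eq_abs_0. unfold Rsqr. lra. }
  rewrite E, sin_plus, Hz, Rmult_0_r, Rplus_0_r, Rabs_mult, Hcz, Rmult_1_r.
  destruct (Rle_dec f (1 - f)).
  - rewrite Rmin_left by lra. pose proof (third_le_sin (PI * f)).
    rewrite Rabs_right by nra. nra.
  - rewrite Rmin_right by lra. rewrite <- sin_PI_x. pose proof (third_le_sin (PI - PI * f)).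
    rewrite Rabs_right by nra. nra.
Qed.

Section PeriodicIntegrals.

Variable f : R -> R.
Hypothesis f_cont : forall x, continuous f x.

Let f_int a b : ex_RInt f a b.
Proof. apply (ex_RInt_continuous (V:=R_CompleteNormedModule)). intros; apply f_cont. Qed.

Lemma ex_RInt_reflect s a b : ex_RInt (fun u => f (s - u)) a b.
Proof.
  apply (ex_RInt_continuous (V:=R_CompleteNormedModule)). intros z _.
  apply (continuous_comp (U:=R_UniformSpace) (V:=R_UniformSpace) (fun u => s - u) f);
    [|apply f_cont].
  apply (ex_derive_continuous (K:=R_AbsRing) (V:=R_NormedModule)). auto_derive; auto.
Qed.

Lemma RInt_reflect s a b : RInt (fun u => f (s - u)) a b = RInt f (s - b) (s - a).
Proof.
  pose proof (RInt_comp_lin (V:=R_CompleteNormedModule) f (-1) s a b (f_int _ _)) as H.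
  rewrite (RInt_ext _ (fun y => scal (-1) (f (s - y)))) in H
    by (intros x _; do 2 f_equal; ring).
  rewrite (RInt_scal (V:=R_CompleteNormedModule)) in H by apply ex_RInt_reflect.
  replace (-1 * a + s) with (s - a) in H by ring.
  replace (-1 * b + s) with (s - b) in H by ring.
  rewrite <- (opp_RInt_swap (V:=R_CompleteNormedModule) f (s - a) (s - b)) by apply f_int.
  rewrite <- H. unfold scal, opp; simpl. unfold mult; simpl. lra.
Qed.

Hypothesis f_periodic : forall x, f (x + 2 * PI) = f x.

Lemma RInt_periodic a : RInt f a (a + 2 * PI) = RInt f 0 (2 * PI).
Proof.
  rewrite <- (RInt_Chasles (V:=R_CompleteNormedModule) f a (2 * PI) (a + 2 * PI)) by apply f_int.
  rewrite <- (RInt_Chasles (V:=R_CompleteNormedModule) f a 0 (2 * PI)) by apply f_int.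
  assert (H : RInt f (2 * PI) (a + 2 * PI) = RInt f 0 a).
  { pose proof (RInt_comp_lin (V:=R_CompleteNormedModule) f 1 (2 * PI) 0 a) as H.
    replace (1 * 0 + 2 * PI) with (2 * PI) in H by ring.
    replace (1 * a + 2 * PI) with (a + 2 * PI) in H by ring.
    rewrite <- H by apply f_int. apply RInt_ext. intros x _.
    unfold scal; simpl; unfold mult; simpl. now rewrite !Rmult_1_l, f_periodic. }
  rewrite H, <- (opp_RInt_swap (V:=R_CompleteNormedModule) f 0 a) by apply f_int.
  unfold plus, opp; simpl. ring.
Qed.

Hypothesis f_even : forall x, f (- x) = f x.

Lemma RInt_reflect_periodic_even s :
  RInt (fun u => f (s - u)) 0 (2 * PI) = 2 * RInt f 0 PI.
Proof.
  rewrite RInt_reflect.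
  replace (s - 0) with ((s - 2 * PI) + 2 * PI) by ring.
  rewrite RInt_periodic, <- (RInt_periodic (- PI)).
  replace (- PI + 2 * PI) with PI by ring.
  rewrite <- (RInt_Chasles (V:=R_CompleteNormedModule) f (- PI) 0 PI) by apply f_int.
  assert (H : RInt f (- PI) 0 = RInt f 0 PI).
  { replace (- PI) with (0 - PI) by ring. rewrite <- (Rminus_0_r 0) at 2.
    rewrite <- RInt_reflect. apply RInt_ext. intros x _. rewrite <- f_even. f_equal. ring. }
  rewrite H. unfold plus; simpl. ring.
Qed.

End PeriodicIntegrals.

Lemma Rdiv_le_cross a b c d : 0 < b -> 0 < d -> a * d <= c * b -> a / b <= c / d.
Proof.
  intros Hb Hd H. apply (Rmult_le_reg_r (b * d)); [nra|].
  replace (a / b * (b * d)) with (a * d) by (field; lra).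
  replace (c / d * (b * d)) with (c * b) by (field; lra). easy.
Qed.

(* With [c = n chord (s - t) / 2], the weight [n^2 / ((1 + n chord x) (1 + n chord y))]
   at [x = s - u], [y = t - u] is split into [hmaj n c x + hmaj n c y]; the extra [c]
   in the denominator is what makes [hmaj] integrate to [O(n log (1 + c) / c)]. *)
Definition hmaj (n : nat) (c x : R) : R :=
  2 * INR n ^ 2 / ((1 + INR n * chord x) * (1 + INR n * chord x + c)).

Lemma hmaj_continuous n c x : 0 <= c -> continuous (hmaj n c) x.
Proof.
  intros Hc. apply continuity_pt_filterlim. unfold hmaj.
  apply (continuity_pt_comp chord
    (fun z => 2 * INR n ^ 2 / ((1 + INR n * z) * (1 + INR n * z + c))));
    [apply chord_continuous | reg].
  pose proof (chord_ge0 x). pose proof (pos_INR n).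
  apply Rgt_not_eq, Rmult_lt_0_compat; nra.
Qed.

Lemma hmaj_periodic n c x : hmaj n c (x + 2 * PI) = hmaj n c x.
Proof. unfold hmaj. now rewrite chord_periodic. Qed.

Lemma hmaj_opp n c x : hmaj n c (- x) = hmaj n c x.
Proof. unfold hmaj. now rewrite chord_opp. Qed.

Lemma weight_le_hmaj_ordered m X Y c : 0 <= m -> 0 <= X <= Y -> 0 <= c <= Y ->
  m / ((1 + X) * (1 + Y)) <= 2 * m / ((1 + X) * (1 + X + c)).
Proof.
  intros Hm HX Hc. apply Rdiv_le_cross; [nra..|].
  assert (0 <= m * (1 + X)) by nra. nra.
Qed.

Lemma hmaj_ge0 n c x : 0 <= c -> 0 <= hmaj n c x.
Proof.
  intros Hc. unfold hmaj. pose proof (chord_ge0 x). pose proof (pos_INR n).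
  apply Rdiv_le_0_compat; [apply Rmult_le_pos, pow_le|apply Rmult_lt_0_compat]; nra.
Qed.

Lemma weight_le_hmaj n D x y : 0 <= D <= chord x + chord y ->
  INR n ^ 2 / ((1 + INR n * chord x) * (1 + INR n * chord y)) <=
  hmaj n (INR n * D / 2) x + hmaj n (INR n * D / 2) y.
Proof.
  intros HD. pose proof (chord_ge0 x). pose proof (chord_ge0 y). pose proof (pos_INR n).
  assert (Hm : 0 <= INR n ^ 2) by (apply pow_le; lra).
  assert (Hc : 0 <= INR n * D / 2) by nra.
  pose proof (hmaj_ge0 n _ x Hc). pose proof (hmaj_ge0 n _ y Hc). unfold hmaj in *.
  destruct (Rle_lt_dec (chord x) (chord y)).
  - pose proof (weight_le_hmaj_ordered (INR n ^ 2) (INR n * chord x) (INR n * chord y)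
      (INR n * D / 2) Hm ltac:(nra) ltac:(nra)). lra.
  - rewrite (Rmult_comm (1 + INR n * chord x)).
    pose proof (weight_le_hmaj_ordered (INR n ^ 2) (INR n * chord y) (INR n * chord x)
      (INR n * D / 2) Hm ltac:(nra) ltac:(nra)). lra.
Qed.

(* [hmaj] is dominated on [0, PI] by a rational function with an explicit logarithmic primitive. *)
Lemma RInt_hmaj_le n c : (1 <= n)%nat -> 0 < c ->
  RInt (hmaj n c) 0 PI <= 12 * INR n / c * ln (1 + c).
Proof.
  intros Hn Hc. assert (HN : 1 <= INR n) by (apply (le_INR 1); auto).
  assert (PIpos := PI_RGT_0).
  set (g := fun x => 2 * INR n ^ 2 / ((1 + INR n * x / 6) * (1 + INR n * x / 6 + c))).
  set (F := fun x => 12 * INR n / c * (ln (1 + INR n * x / 6) - ln (1 + INR n * x / 6 + c))).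
  assert (HI : is_RInt g 0 PI (minus (F PI) (F 0))).
  { apply (is_RInt_derive (V:=R_CompleteNormedModule)); intros x Hx;
      rewrite Rmin_left, Rmax_right in Hx by lra; unfold F, g.
    - auto_derive; [repeat split; nra|]. field. repeat split; nra.
    - apply continuity_pt_filterlim. reg. apply Rgt_not_eq, Rmult_lt_0_compat; nra. }
  eapply Rle_trans.
  - apply (RInt_le _ g); [lra| |now exists (minus (F PI) (F 0))|].
    + apply (ex_RInt_continuous (V:=R_CompleteNormedModule)).
      intros; apply hmaj_continuous; lra.
    + intros x Hx. unfold hmaj, g. pose proof (chord_ge_sixth x ltac:(lra)).
      apply Rmult_le_compat_l; [nra|].
      apply Rinv_le_contravar; [apply Rmult_lt_0_compat; nra|].
      apply Rmult_le_compat; nra.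
  - rewrite (is_RInt_unique _ _ _ _ HI). unfold minus, plus, opp, F; simpl.
    replace (INR n * 0 / 6) with 0 by field. rewrite Rplus_0_r, ln_1.
    assert (ln (1 + INR n * PI / 6) <= ln (1 + INR n * PI / 6 + c))
      by (apply Rlt_le, ln_increasing; nra).
    assert (0 <= 12 * INR n / c) by (apply Rdiv_le_0_compat; lra).
    nra.
Qed.

Lemma RInt_hmaj_reflect_le n c s : (1 <= n)%nat -> 0 < c ->
  RInt (fun u => hmaj n c (s - u)) 0 (2 * PI) <= 24 * INR n / c * ln (1 + c).
Proof.
  intros Hn Hc.
  rewrite RInt_reflect_periodic_even; [| intros; apply hmaj_continuous; lra
    | apply hmaj_periodic | apply hmaj_opp].
  pose proof (RInt_hmaj_le n c Hn Hc). lra.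
Qed.

Lemma Rabs_kern_le_hmaj n p q c0 s t u : (p <= 1)%nat -> (q <= 1)%nat -> (1 <= n)%nat ->
  Rabs (kern n p q c0 (s - u) (t - u)) <=
  32 * INR n ^ (p + q) * (hmaj n (INR n * chord (s - t) / 2) (s - u) +
                          hmaj n (INR n * chord (s - t) / 2) (t - u)).
Proof.
  intros Hp Hq Hn. pose proof (pos_INR n).
  pose proof (chord_ge0 (s - u)). pose proof (chord_ge0 (t - u)).
  pose proof (Rabs_kern_le n p q c0 (s - u) (t - u) Hp Hq Hn) as Hk.
  pose proof (weight_le_hmaj n (chord (s - t)) (s - u) (t - u)
    (conj (chord_ge0 _) (chord_triangle s t u))) as Hw.
  assert (HB : 0 <= 32 * INR n ^ (p + q)) by (apply Rmult_le_pos; [lra|apply pow_le; lra]).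
  eapply Rle_trans; [|apply Rmult_le_compat_l; [exact HB|exact Hw]].
  set (X := 1 + INR n * chord (s - u)) in *. set (Y := 1 + INR n * chord (t - u)) in *.
  assert (0 < X * Y) by (apply Rmult_lt_0_compat; unfold X, Y; nra).
  apply (Rmult_le_reg_r (X * Y)); [easy|].
  unfold Rdiv. rewrite Rmult_assoc, (Rmult_assoc (INR n ^ 2)), Rinv_l by lra. lra.
Qed.

Lemma ln_le_pred x : 0 < x -> ln x <= x - 1.
Proof. intros Hx. pose proof (exp_ineq1_le (ln x)) as H. rewrite exp_ln in H by easy. lra. Qed.

Lemma Rpower_ln_1_plus_le c al : 0 < c -> 0 < al < 1 ->
  Rpower c al * ln (1 + c) <= c / (1 - al).
Proof.
  intros Hc Hal. set (be := 1 - al).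
  assert (Hbe : 0 < be <= 1) by (unfold be; lra).
  assert (Hpow : 0 < Rpower c al) by apply exp_pos.
  apply (Rmult_le_reg_l be); [lra|].
  replace (be * (c / be)) with c by (field; lra).
  destruct (Rle_lt_dec c 1) as [Hc1|Hc1].
  - assert (Rpower c al <= 1).
    { replace 1 with (Rpower 1 al) by (unfold Rpower; now rewrite ln_1, Rmult_0_r, exp_0).
      apply Rle_Rpower_l; lra. }
    assert (0 <= ln (1 + c)) by (rewrite <- ln_1; apply Rlt_le, ln_increasing; lra).
    pose proof (ln_le_pred (1 + c) ltac:(lra)).
    assert (0 <= Rpower c al * ln (1 + c) <= c) by (split; nra). nra.
  - assert (Hlog : ln (1 + c) <= ln 2 + ln c)
      by (rewrite <- ln_mult by lra; apply Rlt_le, ln_increasing; lra).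
    pose proof (ln_le_pred 2 ltac:(lra)) as Hln2.
    pose proof (ln_le_pred (Rpower c be) ltac:(apply exp_pos)) as Hbe_ln.
    rewrite ln_Rpower in Hbe_ln.
    assert (Hsplit : Rpower c al * Rpower c be = c)
      by (rewrite <- Rpower_plus; unfold be; replace (al + (1 - al)) with 1 by ring;
          now apply Rpower_1).
    assert (be * ln (1 + c) <= be * (ln 2 + ln c)) by (apply Rmult_le_compat_l; lra).
    assert (be * ln 2 <= be * 1) by (apply Rmult_le_compat_l; lra).
    rewrite <- Hsplit at 3.
    replace (be * (Rpower c al * ln (1 + c))) with (Rpower c al * (be * ln (1 + c))) by ring.
    apply Rmult_le_compat_l; lra.
Qed.

Lemma ln_ratio_le_Rpower c y al : 0 < y <= 12 * c -> 0 < al < 1 ->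
  ln (1 + c) / c <= 12 / (1 - al) / Rpower y al.
Proof.
  intros Hy Hal. assert (Hc : 0 < c) by lra.
  assert (Hpc : 0 < Rpower c al) by apply exp_pos.
  assert (Hpy : 0 < Rpower y al) by apply exp_pos.
  assert (Hyc : Rpower y al <= 12 * Rpower c al).
  { apply Rle_trans with (Rpower (12 * c) al); [apply Rle_Rpower_l; lra|].
    rewrite <- Rpower_mult_distr by lra. apply Rmult_le_compat_r; [lra|].
    rewrite <- (Rpower_1 12) at 2 by lra. apply Rle_Rpower; lra. }
  pose proof (Rpower_ln_1_plus_le c al Hc Hal).
  apply Rdiv_le_cross; [easy..|].
  apply Rle_trans with (ln (1 + c) * (12 * Rpower c al)).
  - apply Rmult_le_compat_l; [|easy].
    rewrite <- ln_1. apply Rlt_le, ln_increasing; lra.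
  - replace (12 / (1 - al) * c) with (12 * (c / (1 - al))) by (field; lra). nra.
Qed.

Section CovarianceBound.

Variables (rho : Z -> R) (psi : R -> R) (M : R).
Hypothesis spectral : spectral_density_of rho psi.
Hypothesis psi_cont : forall u, continuous psi u.
Hypothesis psi_bounded : forall u, 0 <= u <= 2 * PI -> 0 <= psi u <= M.

Lemma Rabs_cov_deriv_le n p q c0 s t : (1 <= n)%nat -> (p <= 1)%nat -> (q <= 1)%nat ->
  0 < chord (s - t) ->
  let c := INR n * chord (s - t) / 2 in
  PI * Rabs (cov_deriv rho n p q c0 s t) <= 768 * M * INR n ^ (p + q) * (ln (1 + c) / c).
Proof.
  intros Hn Hp Hq Hst c. assert (HN : 1 <= INR n) by (apply (le_INR 1); auto).
  assert (PIpos := PI_RGT_0). assert (Hc : 0 < c) by (unfold c; nra).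
  assert (HM : 0 <= M) by (pose proof (psi_bounded 0); lra).
  set (B := M * (32 * INR n ^ (p + q))).
  assert (HB : 0 <= B) by (apply Rmult_le_pos, Rmult_le_pos, pow_le; lra).
  set (h := hmaj n c).
  assert (Hh : forall x, continuous h x) by (intros; apply hmaj_continuous; lra).
  pose proof (is_RInt_kern_convol rho psi spectral psi_cont n p q c0 s t Hn) as HI.
  assert (Hconv : Rabs (RInt (fun u => psi u * kern n p q c0 (s - u) (t - u)) 0 (2 * PI))
    <= RInt (fun u => B * (h (s - u) + h (t - u))) 0 (2 * PI)).
  { eapply Rle_trans; [apply abs_RInt_le; [lra|eexists; exact HI]|].
    apply RInt_le; [lra|apply ex_RInt_norm; eexists; exact HI| |].
    - apply (ex_RInt_scal (V:=R_NormedModule)), (ex_RInt_plus (V:=R_NormedModule));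
        apply ex_RInt_reflect, Hh.
    - intros u Hu. rewrite Rabs_mult, (Rabs_right (psi u)) by (apply Rle_ge, psi_bounded; lra).
      eapply Rle_trans.
      { apply Rmult_le_compat_r; [apply Rabs_pos|apply psi_bounded; lra]. }
      unfold B. rewrite Rmult_assoc. apply Rmult_le_compat_l; [easy|].
      exact (Rabs_kern_le_hmaj n p q c0 s t u Hp Hq Hn). }
  pose proof (ex_RInt_reflect h Hh s 0 (2 * PI)) as Es.
  pose proof (ex_RInt_reflect h Hh t 0 (2 * PI)) as Et.
  rewrite (is_RInt_unique _ _ _ _ HI) in Hconv.
  rewrite (RInt_scal (V:=R_CompleteNormedModule)) in Hconv
    by exact (ex_RInt_plus (V:=R_NormedModule) _ _ _ _ Es Et).
  rewrite (RInt_plus (V:=R_CompleteNormedModule)) in Hconv by assumption.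
  pose proof (RInt_hmaj_reflect_le n c s Hn Hc) as Is.
  pose proof (RInt_hmaj_reflect_le n c t Hn Hc) as It.
  unfold scal, plus in Hconv; simpl in Hconv; unfold mult in Hconv; simpl in Hconv.
  rewrite Rabs_mult, Rabs_mult, (Rabs_right (2 * PI)), (Rabs_right (INR n)) in Hconv by lra.
  apply (Rmult_le_reg_l (2 * INR n)); [lra|].
  replace (2 * INR n * (768 * M * INR n ^ (p + q) * (ln (1 + c) / c)))
    with (B * (24 * INR n / c * ln (1 + c) + 24 * INR n / c * ln (1 + c)))
    by (unfold B; field; lra).
  eapply Rle_trans; [|apply Rmult_le_compat_l; [exact HB|exact (Rplus_le_compat _ _ _ _ Is It)]].
  eapply Rle_trans; [|exact Hconv]. right; ring.
Qed.

Lemma Rabs_cov_deriv_le_distT n p q c0 s t al :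
  (1 <= n)%nat -> (p <= 1)%nat -> (q <= 1)%nat -> 0 < al < 1 -> 0 < distT s t ->
  Rabs (cov_deriv rho n p q c0 s t) <=
    768 * M / PI * (12 / (1 - al)) * INR n ^ (p + q) / Rpower (INR n * distT s t) al.
Proof.
  intros Hn Hp Hq Hal Hd.
  assert (PIpos := PI_RGT_0). assert (HN : 1 <= INR n) by (apply (le_INR 1); auto).
  assert (HM : 0 <= M) by (pose proof (psi_bounded 0); lra).
  pose proof (distT_le_chord s t) as Hdc.
  set (c := INR n * chord (s - t) / 2).
  assert (Hy : 0 < INR n * distT s t <= 12 * c).
  { unfold c. split; [nra|].
    replace (12 * (INR n * chord (s - t) / 2)) with (INR n * (6 * chord (s - t))) by field.
    apply Rmult_le_compat_l; lra. }
  pose proof (Rabs_cov_deriv_le n p q c0 s t Hn Hp Hq ltac:(lra)) as Hcov.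
  pose proof (ln_ratio_le_Rpower c (INR n * distT s t) al Hy Hal) as Hratio.
  assert (0 <= 768 * M * INR n ^ (p + q)) by (apply Rmult_le_pos; [|apply pow_le]; lra).
  apply (Rmult_le_reg_l PI); [easy|].
  eapply Rle_trans; [exact Hcov|].
  eapply Rle_trans; [apply Rmult_le_compat_l; [easy|exact Hratio]|].
  assert (Rpower (INR n * distT s t) al <> 0) by apply Rgt_not_eq, exp_pos.
  right. field. repeat split; (assumption || lra).
Qed.

End CovarianceBound.

Theorem lemma1 (rho : Z -> R) (psi : R -> R) (a b : nat) (alpha : R) :
  cont_pos_density_on_T psi ->
  spectral_density_of rho psi ->
  (a <= 1)%nat -> (b <= 1)%nat ->
  0 < alpha < 1 ->
  exists C : R, forall (n : nat) (s t : R),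
    (1 <= n)%nat -> 0 < distT s t ->
    Rabs (r_der rho a b n s t) <=
      C * INR n ^ (a + b) / Rpower (INR n * distT s t) alpha.
Proof.
  intros [Hcont [_ Hpos]] Hsp Ha Hb Hal.
  destruct (continuity_ab_maj psi 0 (2 * PI)) as [umax [Hmax _]];
    [pose proof PI_RGT_0; lra | intros; apply continuity_pt_filterlim, Hcont |].
  exists (768 * psi umax / PI * (12 / (1 - alpha))).
  intros n s t Hn Hd.
  rewrite r_der_cov_deriv by easy.
  apply (Rabs_cov_deriv_le_distT rho psi); try easy.
  intros u Hu. split; [apply Rlt_le, Hpos | now apply Hmax].
Qed.
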